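(* In the directed variant of the greedy routing network creation game on any finite point set in any metric space, there is no best response cycle.
   Context: Let $\mathcal P$ be a finite set of $n\ge2$ points (agents) in a metric space with metric $d$. In the directed variant each agent $u$ chooses a strategy $S_u\subseteq\{(u,v):v\in\mathcal P\setminus\{u\}\}$ of directed edges, which it owns. A profile $\mathbf s=(S_u)_u$ induces the directed network $G(\mathbf s)=(\mathcal P,\bigcup_u S_u)$. A greedy routing path from $u$ to $w$ is a directed path $(x_1=u,\dots,x_j=w)$ in $G(\mathbf s)$ with $d(x_i,w)>d(x_{i+1},w)$ for all $i$; $u$ is greedy connected if it has a greedy routing path to every other agent. The cost of $u$ is $c_u(\mathbf s)=|S_u|$ if $u$ is greedy connected and $\infty$ otherwise. A best response of $u$ in $\mathbf s$ is a strategy minimizing $c_u(S'_u,\mathbf s_{-u})$ over all strategies $S'_u$. A best response path is a sequence of profiles $\mathbf s_0,\dots,\mathbf s_k$ where each $\mathbf s_i$ arises from $\mathbf s_{i-1}$ by one agent switching (from a non-best-response strategy) to a best response; a best response cycle is a best response path with $k\ge1$ and $\mathbf s_0=\mathbf s_k$. *)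

From mathcomp Require Import all_boot all_order all_algebra.
Set Implicit Arguments. Unset Strict Implicit. Unset Printing Implicit Defensive.
Import Order.TTheory GRing.Theory Num.Theory.
Local Open Scope ring_scope.

Definition is_metric (R : realFieldType) (T : finType) (d : T -> T -> R) : Prop :=
  [/\ (forall x y, d x y = 0 <-> x = y),
      (forall x y, d x y = d y x) &
      (forall x y z, d x z <= d x y + d y z)].

(* A strategy profile: agent u owns the directed edges (u,v) for v \in s u. *)
Definition profile (T : finType) := {ffun T -> {set T}}.

Definition valid_strategy (T : finType) (u : T) (S : {set T}) : bool := u \notin S.
Definition valid_profile (T : finType) (s : profile T) : Prop :=
  forall u, valid_strategy u (s u).

Definition greedy_step (R : realFieldType) (T : finType) (d : T -> T -> R)
  (s : profile T) (w : T) : rel T :=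
  fun x y => (y \in s x) && (d y w < d x w).

Definition greedy_path (R : realFieldType) (T : finType) (d : T -> T -> R)
  (s : profile T) (u w : T) : Prop :=
  exists p : seq T, path (greedy_step d s w) u p /\ last u p = w.

Definition greedy_connected (R : realFieldType) (T : finType) (d : T -> T -> R)
  (s : profile T) (u : T) : Prop :=
  forall w, w != u -> greedy_path d s u w.

(* The cost c_u(s) is |S_u| if u is greedy connected in G(s) and infinity
   otherwise.  cost_le d u s1 s2  means  c_u(s1) <= c_u(s2)  in N \cup {oo}. *)
Definition cost_le (R : realFieldType) (T : finType) (d : T -> T -> R)
  (u : T) (s1 s2 : profile T) : Prop :=
  greedy_connected d s2 u -> greedy_connected d s1 u /\ (#|s1 u| <= #|s2 u|)%N.

Definition upd (T : finType) (s : profile T) (u : T) (S : {set T}) : profile T :=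
  [ffun v => if v == u then S else s v].

Definition best_response (R : realFieldType) (T : finType) (d : T -> T -> R)
  (s : profile T) (u : T) (S : {set T}) : Prop :=
  valid_strategy u S /\
  forall S', valid_strategy u S' -> cost_le d u (upd s u S) (upd s u S').

Definition br_step (R : realFieldType) (T : finType) (d : T -> T -> R)
  (s s' : profile T) : Prop :=
  exists u : T,
    [/\ ~ best_response d s u (s u),
        best_response d s u (s' u) &
        forall v, v != u -> s' v = s v].

Definition br_path (R : realFieldType) (T : finType) (d : T -> T -> R)
  (k : nat) (ss : nat -> profile T) : Prop :=
  (forall i, (i <= k)%N -> valid_profile (ss i)) /\
  (forall i, (i < k)%N -> br_step d (ss i) (ss i.+1)).

Definition br_cycle (R : realFieldType) (T : finType) (d : T -> T -> R)
  (k : nat) (ss : nat -> profile T) : Prop :=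
  [/\ (1 <= k)%N, br_path d k ss & ss 0%N = ss k].

(** The set of pairs (x, w) joined by a greedy routing path only grows along a
    best response path: the deviating agent ends up greedy connected, so any
    greedy path through it can be rerouted from there.  Along a cycle this set
    is therefore constant, and best responses only depend on it.  Hence the
    agent that deviates first keeps playing a best response for the rest of
    the cycle, contradicting the fact that it did not in the initial profile. *)
From mathcomp Require Import all_boot all_order all_algebra.
From mathcomp Require Import lra.
Set Implicit Arguments. Unset Strict Implicit. Unset Printing Implicit Defensive.
Import Order.TTheory GRing.Theory Num.Theory.
Local Open Scope ring_scope.

Section GreedyRouting.

Variables (R : realFieldType) (T : finType) (d : T -> T -> R).
Hypothesis metric_d : is_metric d.

Lemma metric_ge0 x y : 0 <= d x y.
Proof.
case: metric_d => d0 dC dtri; have := dtri x y x.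
by rewrite (dC y x) (proj2 (d0 x x)) //; lra.
Qed.

Lemma metric_gt0 x y : x != y -> 0 < d x y.
Proof.
move=> xy; rewrite lt_def metric_ge0 andbT; apply: contra xy => /eqP dxy0.
by apply/eqP; case: metric_d => d0 _ _; apply/d0.
Qed.

Lemma metric_xx x : d x x = 0.
Proof. by case: metric_d => d0 _ _; apply/d0. Qed.

Lemma upd_ffunE (s : profile T) u S v :
  upd s u S v = if v == u then S else s v.
Proof. by rewrite ffunE. Qed.

Lemma upd_same (s : profile T) u S : upd s u S u = S.
Proof. by rewrite upd_ffunE eqxx. Qed.

Lemma upd_eq_off (s t : profile T) u S :
  (forall v, v != u -> t v = s v) -> upd t u S = upd s u S.
Proof. by move=> ts; apply/ffunP => v; rewrite !upd_ffunE; case: ifPn => // /ts. Qed.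

Lemma best_response_off (s t : profile T) u S :
  (forall v, v != u -> t v = s v) -> best_response d s u S -> best_response d t u S.
Proof. by move=> ts [Su brS]; split=> // S'; rewrite !(upd_eq_off _ ts); exact: brS. Qed.

Lemma upd_self_off (s t : profile T) u :
  (forall v, v != u -> t v = s v) -> t = upd s u (t u).
Proof.
by move=> ts; apply/ffunP => v; rewrite upd_ffunE; case: eqVneq => [->|/ts].
Qed.

Lemma greedy_path_agree (s t : profile T) w (D : R) :
  (forall z, d z w < D -> t z = s z) ->
  forall v, d v w < D -> greedy_path d s v w -> greedy_path d t v w.
Proof.
move=> ts v + [p [sp pw]]; elim: p v sp pw => [|y p IH] v /=.
  by move=> _ vw _; exists [::].
case/andP=> /andP[ysv dyv] sp pw vD.
have [q [tq qw]] := IH y sp pw (lt_trans dyv vD).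
by exists (y :: q); rewrite /= tq qw andbT /greedy_step ts // ysv dyv.
Qed.

Definition greedy_sub (s t : profile T) : Prop :=
  forall x w, greedy_path d s x w -> greedy_path d t x w.

Definition greedy_equiv (s t : profile T) : Prop :=
  forall x w, greedy_path d s x w <-> greedy_path d t x w.

(* A greedy path starting at u only uses the strategy of u in its first edge. *)
Lemma greedy_path_upd_sub (s t : profile T) u S w :
  greedy_sub s t -> greedy_path d (upd s u S) u w -> greedy_path d (upd t u S) u w.
Proof.
move=> st [[|y p] [/= sp pw]]; first by rewrite -pw; exists [::].
case/andP: sp => /andP[ySu dyu] sp.
have off r z : d z w < d u w -> upd r u S z = r z.
  by move=> zu; rewrite upd_ffunE; case: eqVneq zu => // ->; rewrite ltxx.
have sy : greedy_path d s y w.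
  by apply: (greedy_path_agree (fun z zu => esym (off s z zu)) dyu); exists p.
have [q [tq qw]] := greedy_path_agree (off t) dyu (st _ _ sy).
exists (y :: q); rewrite /= tq qw andbT /greedy_step dyu andbT.
by rewrite upd_same; rewrite upd_same in ySu.
Qed.

Lemma greedy_connected_upd_sub (s t : profile T) u S :
  greedy_sub s t -> greedy_connected d (upd s u S) u ->
  greedy_connected d (upd t u S) u.
Proof. by move=> st cs w wu; apply: greedy_path_upd_sub st (cs w wu). Qed.

Lemma best_response_equiv (s t : profile T) u S :
  greedy_equiv s t -> best_response d s u S -> best_response d t u S.
Proof.
move=> st [Su brS]; split => // S' S'u ct'.
have ts : greedy_sub t s by move=> x w /st.
have [cs le_SS'] := brS S' S'u (greedy_connected_upd_sub ts ct').
split; first by apply: greedy_connected_upd_sub cs => x w /st.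
by rewrite !upd_same in le_SS' *.
Qed.

(* Linking u directly to every other agent is a valid strategy of finite cost. *)
Lemma best_response_connected (s : profile T) u S :
  best_response d s u S -> greedy_connected d (upd s u S) u.
Proof.
case=> _ brS; have all_u : valid_strategy u [set~ u] by rewrite /valid_strategy !inE eqxx.
suff call : greedy_connected d (upd s u [set~ u]) u by case: (brS _ all_u call).
move=> w wu; exists [:: w]; split => //=.
by rewrite andbT /greedy_step upd_same !inE wu metric_xx metric_gt0 // eq_sym.
Qed.

Lemma br_step_greedy_sub (s t : profile T) : br_step d s t -> greedy_sub s t.
Proof.
case=> u [_ brt ts]; have ct : greedy_connected d t u.
  by rewrite (upd_self_off ts); exact: best_response_connected brt.
move=> x w [p [sp pw]]; elim: p x sp pw => [|y p IH] x /=.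
  by move=> _ xw; exists [::].
case/andP=> /andP[ysx dyx] sp pw.
have [q [tq qw]] := IH y sp pw.
case: (eqVneq x u) => [->|xu].
  by case: (eqVneq w u) => [->|wu]; [exists [::] | exact: ct].
by exists (y :: q); rewrite /= tq qw andbT /greedy_step ts // ysx dyx.
Qed.

Lemma br_step_best_response (s t : profile T) u :
  greedy_equiv s t -> br_step d s t ->
  best_response d s u (s u) -> best_response d t u (t u).
Proof.
move=> st [v [not_brv _ tv]] bru.
have [vu|uv] := eqVneq u v; first by rewrite vu in bru; case: (not_brv bru).
by rewrite tv //; apply: best_response_equiv bru.
Qed.

Lemma br_path_greedy_sub k (ss : nat -> profile T) i j :
  br_path d k ss -> (i <= j <= k)%N -> greedy_sub (ss i) (ss j).
Proof.
case=> _ steps /andP[]; elim: j => [|j IH].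
  by rewrite leqn0 => /eqP -> _.
rewrite leq_eqVlt => /orP[/eqP <- _ x w //|ij jk x w g].
by apply: (br_step_greedy_sub (steps j jk)); apply: IH => //; exact: ltnW.
Qed.

Lemma br_cycle_greedy_equiv k (ss : nat -> profile T) i j :
  br_cycle d k ss -> (i <= k)%N -> (j <= k)%N -> greedy_equiv (ss i) (ss j).
Proof.
case=> _ bp ss0k.
have to0 l : (l <= k)%N -> greedy_sub (ss l) (ss 0%N).
  by move=> lk; rewrite ss0k; apply: br_path_greedy_sub bp _; rewrite lk leqnn.
have from0 l : (l <= k)%N -> greedy_sub (ss 0%N) (ss l).
  by move=> lk; apply: br_path_greedy_sub bp _; rewrite lk.
by move=> ik jk x w; split=> [/(to0 _ ik) /(from0 _ jk) | /(to0 _ jk) /(from0 _ ik)].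
Qed.

End GreedyRouting.

Theorem mainTheorem7 (R : realFieldType) (T : finType) (d : T -> T -> R) :
  (1 < #|T|)%N -> is_metric d ->
  forall (k : nat) (ss : nat -> profile T), ~ br_cycle d k ss.
Proof.
move=> _ metric_d k ss cyc; have [k_gt0 [_ steps] ss0k] := cyc.
have [u [not_br0 br1 ss10]] := steps 0%N k_gt0.
have brk i : (0 < i <= k)%N -> best_response d (ss i) u (ss i u).
  elim: i => [//|[|i] IH] /andP[_ ik].
    exact: best_response_off ss10 br1.
  have equiv_i : greedy_equiv d (ss i.+1) (ss i.+2).
    exact: br_cycle_greedy_equiv cyc (ltnW ik) ik.
  exact: br_step_best_response equiv_i (steps _ ik) (IH (ltnW ik)).
by apply: not_br0; rewrite ss0k; apply: brk; rewrite k_gt0 leqnn.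
Qed.
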